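(* For every graph $G$ with $m\ge 2$ edges, \[\lambda_1^2+\lambda_2^2\le m+\big(3\,t(G)\big)^{2/3},\] and the inequality is strict if $t(G)>0$.
   Context: $\lambda_1\ge\lambda_2$ denote the two largest eigenvalues of the adjacency matrix of $G$, and $t(G)$ denotes the number of triangles in $G$. *)

From HB Require Import structures.
From mathcomp Require Import all_boot all_order all_algebra.
From mathcomp Require Import reals exp.
Set Implicit Arguments. Unset Strict Implicit. Unset Printing Implicit Defensive.
Import Order.TTheory GRing.Theory Num.Theory.
Local Open Scope ring_scope.

Definition simple_graph (n : nat) (e : rel 'I_n) : Prop :=
  symmetric e /\ irreflexive e.

Definition num_cliques (n k : nat) (e : rel 'I_n) : nat :=
  #|[set S : {set 'I_n} | (#|S| == k) &&
       [forall x in S, forall y in S, (x != y) ==> e x y]]|.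

Definition num_edges (n : nat) (e : rel 'I_n) : nat := num_cliques 2 e.

Definition num_triangles (n : nat) (e : rel 'I_n) : nat := num_cliques 3 e.

Definition adjmx (R : nzRingType) (n : nat) (e : rel 'I_n) : 'M[R]_n :=
  \matrix_(i, j) (e i j)%:R.

Definition eigen_desc (R : numDomainType) (n : nat) (A : 'M[R]_n) (s : seq R) : Prop :=
  sorted (>=%R) s /\ char_poly A = \prod_(x <- s) ('X - x%:P).

From HB Require Import structures.
From mathcomp Require Import all_boot all_order all_algebra.
From mathcomp Require Import reals exp.
From mathcomp Require Import complex.
From mathcomp Require Import ring lra.
Set Implicit Arguments. Unset Strict Implicit. Unset Printing Implicit Defensive.
Import Order.TTheory GRing.Theory Num.Theory.
Local Open Scope ring_scope.
Local Open Scope sesquilinear_scope.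

(* Let λ1 ≥ λ2 ≥ ... be the eigenvalues of the adjacency matrix A. Their power sums are
   Σλ = tr A = 0, Σλ² = tr A² = 2m and Σλ³ = tr A³ = 6t, and every eigenvalue is at least
   -λ1 by the Perron-Frobenius bound |λ| ≤ λ1. Writing λ1² + λ2² = m + d² with d > 0, the
   claim d² < (3t)^(2/3) becomes 2d³ < Σλ³, an inequality between the power sums of a real
   sequence with zero sum and entries in [-λ1, λ1]. If λ2 < 0, each remaining eigenvalue x
   lies in [-λ1, λ2], and x(x + λ1)(x - λ2) ≥ 0 bounds its cube by lower power sums. If
   λ2 ≥ 0, the smallest eigenvalue -p is kept apart and the others, with sum of squares r²,
   contribute at least -min(p, r) r² to Σλ³; the remaining inequality in four variables
   follows from the convexity of u ↦ u^(3/2) on the squares. *)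

(** * Power sums of real sequences *)

Section CubeInequalities.
Variable R : rcfType.
Implicit Types a b d p q r u v w x y z : R.
Implicit Types c : seq R.

Lemma cube_le_mul_sqr x y : 0 <= x -> x <= y -> x ^+ 3 <= y * x ^+ 2.
Proof. by move=> x_ge0 x_le_y; rewrite exprS ler_wpM2r // exprn_ge0. Qed.

Lemma cube_lt_mul_sqr x y : 0 < x -> x < y -> x ^+ 3 < y * x ^+ 2.
Proof. by move=> x_gt0 x_lt_y; rewrite exprS ltr_pM2r // exprn_gt0. Qed.

Lemma sum_cubes3_lt x y w z : 0 <= x -> 0 < y -> 0 < w -> 0 <= z ->
  z ^+ 2 = x ^+ 2 + y ^+ 2 + w ^+ 2 -> x ^+ 3 + y ^+ 3 + w ^+ 3 < z ^+ 3.
Proof.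
move=> x_ge0 y_gt0 w_gt0 z_ge0 z2.
have x_le_z : x <= z by rewrite -(ler_pXn2r (_ : 0 < 2)%N) ?nnegrE //; nra.
have y_le_z : y <= z by rewrite -(ler_pXn2r (_ : 0 < 2)%N) ?nnegrE //; nra.
have w_lt_z : w < z by rewrite -(ltr_pXn2r (_ : 0 < 2)%N) ?nnegrE //; nra.
have := cube_le_mul_sqr x_ge0 x_le_z; have := cube_le_mul_sqr (ltW y_gt0) y_le_z.
have := cube_lt_mul_sqr w_gt0 w_lt_z.
have -> : z ^+ 3 = z * z ^+ 2 by rewrite exprS.
rewrite z2; lra.
Qed.

(* [(s^2 + s t + t^2) / (s + t) = (s^3 - t^3) / (s^2 - t^2)] is nondecreasing in [s] and [t]. *)
Lemma sqr_form_mul_le u w z y : 0 <= u -> u <= w -> w <= z -> u <= y -> y <= z ->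
  (w ^+ 2 + w * u + u ^+ 2) * (z + y) <= (z ^+ 2 + z * y + y ^+ 2) * (w + u).
Proof.
move=> u_ge0 u_le_w w_le_z u_le_y y_le_z.
have [wy0|wy_neq0] := eqVneq (w + y) 0.
  have w0 : w = 0 by lra.
  have y0 : y = 0 by lra.
  have u0 : u = 0 by lra.
  by rewrite w0 y0 u0; nra.
have wy_gt0 : 0 < w + y by rewrite lt_def wy_neq0; lra.
rewrite -subr_ge0 -(pmulr_lge0 _ wy_gt0).
have -> : ((z ^+ 2 + z * y + y ^+ 2) * (w + u) - (w ^+ 2 + w * u + u ^+ 2) * (z + y)) * (w + y)
    = (z - w) * (z * w + y * z + y * w) * (w + u)
      + (y - u) * (y * u + w * y + w * u) * (z + y) by ring.
by apply: addr_ge0; apply: mulr_ge0; try apply: mulr_ge0; nra.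
Qed.

(* Two-point Karamata inequality for [u |-> u^(3/2)]: [(z^2, u^2)] majorizes [(w^2, y^2)]. *)
Lemma sum_cubes_le_spread u w z y : 0 <= u -> u <= w -> w <= z -> 0 <= y ->
  y ^+ 2 + w ^+ 2 = z ^+ 2 + u ^+ 2 -> w ^+ 3 + y ^+ 3 <= z ^+ 3 + u ^+ 3.
Proof.
move=> u_ge0 u_le_w w_le_z y_ge0 sqr_eq.
have y_le_z : y <= z by nra.
have u_le_y : u <= y by nra.
have [wu0|wu_neq0] := eqVneq (w + u) 0.
  have w0 : w = 0 by lra.
  have u0 : u = 0 by lra.
  have -> : y = z by move: sqr_eq; rewrite w0 u0; nra.
  by rewrite w0 u0; lra.
have wu_gt0 : 0 < w + u by rewrite lt_def wu_neq0; lra.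
have zy_gt0 : 0 < z + y by lra.
set f := z ^+ 2 - y ^+ 2.
have f_ge0 : 0 <= f by rewrite /f; nra.
have zy3 : (z ^+ 3 - y ^+ 3) * ((z + y) * (w + u)) = f * ((z ^+ 2 + z * y + y ^+ 2) * (w + u)).
  by rewrite /f; ring.
have wu3 : (w ^+ 3 - u ^+ 3) * ((z + y) * (w + u)) = f * ((w ^+ 2 + w * u + u ^+ 2) * (z + y)).
  have -> : f = w ^+ 2 - u ^+ 2 by rewrite /f; lra.
  ring.
suff : (w ^+ 3 - u ^+ 3) * ((z + y) * (w + u)) <= (z ^+ 3 - y ^+ 3) * ((z + y) * (w + u)).
  by rewrite ler_pM2r ?mulr_gt0 //; lra.
by rewrite zy3 wu3 ler_wpM2l // sqr_form_mul_le.
Qed.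

Lemma sum_cubes_lt_spread u w z x y v : 0 <= u -> u <= w -> w <= z ->
  0 <= x -> 0 < y -> 0 < v -> x ^+ 2 + y ^+ 2 + v ^+ 2 + w ^+ 2 = z ^+ 2 + u ^+ 2 ->
  w ^+ 3 + x ^+ 3 + y ^+ 3 + v ^+ 3 < z ^+ 3 + u ^+ 3.
Proof.
move=> u_ge0 u_le_w w_le_z x_ge0 y_gt0 v_gt0 sqr_eq.
pose t := Num.sqrt (x ^+ 2 + y ^+ 2 + v ^+ 2).
have t2 : t ^+ 2 = x ^+ 2 + y ^+ 2 + v ^+ 2 by rewrite sqr_sqrtr //; nra.
have spread : t ^+ 2 + w ^+ 2 = z ^+ 2 + u ^+ 2 by rewrite t2.
have := sum_cubes_le_spread u_ge0 u_le_w w_le_z (sqrtr_ge0 _) spread.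
have := sum_cubes3_lt x_ge0 y_gt0 v_gt0 (sqrtr_ge0 _) t2.
lra.
Qed.

Lemma sum_cubes_lt_top2 a b p q r d : 0 <= b -> b <= a -> 0 < p -> p <= a ->
  0 <= q -> q <= p -> q <= r -> 0 < d ->
  a ^+ 2 + b ^+ 2 = p ^+ 2 + r ^+ 2 + 2 * d ^+ 2 ->
  p ^+ 3 + q * r ^+ 2 + 2 * d ^+ 3 < a ^+ 3 + b ^+ 3.
Proof.
move=> b_ge0 b_le_a p_gt0 p_le_a q_ge0 q_le_p q_le_r d_gt0 sqr_eq.
have r_ge0 : 0 <= r by lra.
have qr_le_r3 : q * r ^+ 2 <= r ^+ 3 by rewrite [r ^+ 3]exprS ler_wpM2r ?sqr_ge0.
have [p_lt_b|b_le_p] := ltrP p b.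
  have [d_le_b|b_lt_d] := lerP d b.
    have := cube_lt_mul_sqr p_gt0 p_lt_b; have := cube_le_mul_sqr (ltW d_gt0) d_le_b.
    have : q * r ^+ 2 <= b * r ^+ 2 by rewrite ler_wpM2r ?sqr_ge0 //; lra.
    have : b * a ^+ 2 <= a ^+ 3 by rewrite [a ^+ 3]exprS ler_wpM2r ?sqr_ge0.
    have -> : b ^+ 3 = b * b ^+ 2 by rewrite exprS.
    nra.
  have d_le_a : d <= a by nra.
  have := @sum_cubes_lt_spread b d a r d p b_ge0 (ltW b_lt_d) d_le_a r_ge0 d_gt0 p_gt0 ltac:(lra).
  lra.
have [r_le_p|p_lt_r] := lerP r p.
  have := @sum_cubes_lt_spread b p a r d d b_ge0 b_le_p p_le_a r_ge0 d_gt0 d_gt0 ltac:(lra).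
  lra.
have r_le_a : r <= a by nra.
have := @sum_cubes_lt_spread b r a p d d b_ge0 (le_trans b_le_p (ltW p_lt_r)) r_le_a
  (ltW p_gt0) d_gt0 d_gt0 ltac:(lra).
lra.
Qed.

Lemma exists_min_mem c : c != [::] -> exists2 w, w \in c & {in c, forall x, w <= x}.
Proof.
elim: c => // x c IH _; have [->|/IH [w wc w_min]] := eqVneq c [::].
  by exists x => [|y]; rewrite ?mem_seq1 // => /eqP->.
have [x_le_w|w_lt_x] := lerP x w.
  exists x; first exact: mem_head.
  by move=> y; rewrite in_cons => /predU1P [->|/w_min]; [|apply: le_trans].
exists w; first by rewrite in_cons wc orbT.
by move=> y; rewrite in_cons => /predU1P [->|/w_min] //; rewrite ltW.
Qed.

Lemma ler_sum_mem (I : eqType) (r : seq I) (F : I -> R) i : i \in r ->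
  {in r, forall j, 0 <= F j} -> F i <= \sum_(j <- r) F j.
Proof.
move=> ir F_ge0; rewrite (perm_big _ (perm_to_rem ir)) big_cons lerDl.
by rewrite big_seq sumr_ge0 // => j /mem_rem /F_ge0.
Qed.

(* The case [λ2 = -b < 0], once the other eigenvalues are bounded by their first two power
   sums. *)
Lemma cube_lt_mul_sqr_sub a b d : 0 < b -> 0 <= d -> 2 * b <= a -> a * b <= d ^+ 2 ->
  2 * d ^+ 2 <= a ^+ 2 - a * b + 2 * b ^+ 2 ->
  d ^+ 3 < (a + b) * (d ^+ 2 - b ^+ 2).
Proof.
move=> b_gt0 d_ge0 b2_le_a ab_le_d2 d2_le.
have d2_le_a2 : 2 * d ^+ 2 <= a ^+ 2 by nra.
have d_le_a : d <= 5 / 7 * a by rewrite -(@ler_pXn2r _ 2) ?nnegrE //; nra.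
have : d ^+ 3 <= 5 / 7 * a * d ^+ 2 by apply: cube_le_mul_sqr.
have : (a + b) * b ^+ 2 < (2 / 7 * a + b) * d ^+ 2.
  have : (2 / 7 * a + b) * (a * b) <= (2 / 7 * a + b) * d ^+ 2 by rewrite ler_wpM2l //; lra.
  have : b ^+ 2 < 2 / 7 * a ^+ 2 by nra.
  nra.
nra.
Qed.

Lemma two_cube_lt_sum_cubes_snd_lt0 a b c d : b < 0 ->
  {in c, forall x, - a <= x <= b} -> c != [::] ->
  a + b + \sum_(x <- c) x = 0 -> 0 < d ->
  2 * d ^+ 2 = a ^+ 2 + b ^+ 2 - \sum_(x <- c) x ^+ 2 ->
  2 * d ^+ 3 < a ^+ 3 + b ^+ 3 + \sum_(x <- c) x ^+ 3.
Proof.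
move=> b_lt0 c_bnd c_neq0 sum0 d_gt0 d2.
set S := \sum_(x <- c) x ^+ 2 in d2 *; set Sc := \sum_(x <- c) x in sum0.
have Sc_le_mem x : x \in c -> Sc <= x.
  move=> xc; rewrite -[x]opprK -[Sc]opprK lerN2 /Sc -sumrN.
  by apply: (ler_sum_mem (F := -%R)) => // y /c_bnd; lra.
have Sc_le_b : Sc <= b.
  have [x xc] : exists x, x \in c by case: (c) c_neq0 => // x ? _; exists x; apply: mem_head.
  by have := Sc_le_mem x xc; have := c_bnd x xc; lra.
have cubes_ge : (b - a) * S + a * b * Sc <= \sum_(x <- c) x ^+ 3.
  rewrite /S /Sc !mulr_sumr -big_split !big_seq /=; apply: ler_sum => x /c_bnd x_bnd.
  have : 0 <= x * (x + a) * (x - b) by apply: mulr_le0; [apply: mulr_le0_ge0|]; lra.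
  nra.
have S_ge : b * Sc <= S.
  rewrite /S /Sc mulr_sumr !big_seq; apply: ler_sum => x /c_bnd x_bnd; nra.
have S_le : S <= Sc ^+ 2.
  rewrite expr2 {2}/Sc mulr_sumr /S !big_seq; apply: ler_sum => x xc.
  have := Sc_le_mem x xc; have := c_bnd x xc; nra.
have := @cube_lt_mul_sqr_sub a (- b) d ltac:(lra) (ltW d_gt0) ltac:(lra) ltac:(nra) ltac:(nra).
nra.
Qed.

Lemma two_cube_lt_sum_cubes_snd_ge0 a b c d : 0 <= b -> b <= a ->
  {in c, forall x, - a <= x} -> c != [::] ->
  a + b + \sum_(x <- c) x = 0 -> 0 < d ->
  2 * d ^+ 2 = a ^+ 2 + b ^+ 2 - \sum_(x <- c) x ^+ 2 ->
  2 * d ^+ 3 < a ^+ 3 + b ^+ 3 + \sum_(x <- c) x ^+ 3.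
Proof.
move=> b_ge0 b_le_a c_ge c_neq0 sum0 d_gt0 d2.
have [w wc w_min] := exists_min_mem c_neq0.
set mid := rem w c.
have sum_c (F : R -> R) : \sum_(x <- c) F x = F w + \sum_(x <- mid) F x.
  by rewrite (perm_big _ (perm_to_rem wc)) big_cons.
have w_lt0 : w < 0.
  rewrite ltNge; apply/negP => w_ge0.
  have : 0 <= \sum_(x <- c) x by rewrite big_seq sumr_ge0 // => x /w_min; apply: le_trans.
  have : 0 <= \sum_(x <- c) x ^+ 2 by rewrite sumr_ge0 // => x _; rewrite sqr_ge0.
  nra.
set p := - w; set M := \sum_(x <- mid) x ^+ 2; set r := Num.sqrt M; set q := Num.min p r.
have r_ge0 : 0 <= r := sqrtr_ge0 M.
have sqr_le_M x : x \in mid -> `|x| <= r.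
  move=> xm; rewrite /r -sqrtr_sqr ler_sqrt ?sumr_ge0 // => [|y _]; last exact: sqr_ge0.
  by apply: (ler_sum_mem (F := fun y => y ^+ 2)) => // y _; apply: sqr_ge0.
have mid_ge x : x \in mid -> - q <= x.
  move=> xm; rewrite lerNl le_min; apply/andP; split; first by rewrite lerN2 w_min ?(mem_rem xm).
  by apply: le_trans (sqr_le_M x xm); rewrite -normrN ler_norm.
have cubes_ge : - q * M <= \sum_(x <- mid) x ^+ 3.
  rewrite /M mulr_sumr !big_seq; apply: ler_sum => x /mid_ge x_ge.
  have : 0 <= x ^+ 2 * (x + q) by apply: mulr_ge0; [apply: sqr_ge0|lra].
  nra.
have q_ge0 : 0 <= q by rewrite le_min r_ge0 andbT /p; lra.
have q_le_p : q <= p by rewrite ge_min lexx.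
have q_le_r : q <= r by rewrite ge_min lexx orbT.
have p_gt0 : 0 < p by rewrite /p; lra.
have p_le_a : p <= a by rewrite /p lerNl c_ge.
have r2 : r ^+ 2 = M by rewrite sqr_sqrtr // sumr_ge0 // => x _; apply: sqr_ge0.
have sqr_eq : a ^+ 2 + b ^+ 2 = p ^+ 2 + r ^+ 2 + 2 * d ^+ 2.
  by move: d2; rewrite sum_c -/M r2 /p sqrrN; lra.
have := sum_cubes_lt_top2 b_ge0 b_le_a p_gt0 p_le_a q_ge0 q_le_p q_le_r d_gt0 sqr_eq.
rewrite sum_c -/M r2 (_ : w ^+ 3 = - p ^+ 3); last by rewrite /p; ring.
by move: cubes_ge; rewrite mulNr; lra.
Qed.

Lemma two_cube_lt_sum_cubes a b c d : b <= a ->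
  {in c, forall x, - a <= x <= b} -> c != [::] ->
  a + b + \sum_(x <- c) x = 0 -> 0 < d ->
  2 * d ^+ 2 = a ^+ 2 + b ^+ 2 - \sum_(x <- c) x ^+ 2 ->
  2 * d ^+ 3 < a ^+ 3 + b ^+ 3 + \sum_(x <- c) x ^+ 3.
Proof.
move=> b_le_a c_bnd; have [b_lt0|b_ge0] := ltrP b 0.
  exact: two_cube_lt_sum_cubes_snd_lt0.
by apply: two_cube_lt_sum_cubes_snd_ge0 => // x /c_bnd /andP[].
Qed.

Lemma two_cube_lt_sum_cubes_sorted s d : sorted >=%R s -> (3 <= size s)%N ->
  \sum_(x <- s) x = 0 -> {in s, forall x, - s`_0 <= x} -> 0 < d ->
  2 * d ^+ 2 = 2 * (s`_0 ^+ 2 + s`_1 ^+ 2) - \sum_(x <- s) x ^+ 2 ->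
  2 * d ^+ 3 < \sum_(x <- s) x ^+ 3.
Proof.
case: s => [|a [|b c]] // /= /andP[b_le_a c_sorted] size_c.
rewrite !big_cons !addrA => sum0 s_ge d_gt0 d2; apply: two_cube_lt_sum_cubes => //.
- move=> x xc; rewrite s_ge ?in_cons ?xc ?orbT //=.
  by have /allP := order_path_min ge_trans c_sorted; apply.
- by case: (c) size_c.
- lra.
Qed.

End CubeInequalities.

(** * Spectra of Hermitian matrices *)

Lemma mxtrace_conjmx (F : comUnitRingType) n (P X : 'M[F]_n) : P \in unitmx ->
  \tr (invmx P *m X *m P) = \tr X.
Proof. by move=> P_unit; rewrite mxtrace_mulC mulmxA mulmxV // mul1mx. Qed.

Lemma mulmx_conjmx (F : comUnitRingType) n (P X Y : 'M[F]_n) : P \in unitmx ->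
  (invmx P *m X *m P) *m (invmx P *m Y *m P) = invmx P *m (X *m Y) *m P.
Proof. by move=> P_unit; rewrite -!mulmxA (mulmxA P) mulmxV // mul1mx. Qed.

Lemma char_poly_conjmx (F : fieldType) n (P X : 'M[F]_n) : P \in unitmx ->
  char_poly (invmx P *m X *m P) = char_poly X.
Proof.
move=> P_unit; rewrite /char_poly /char_poly_mx.
set Pc := map_mx polyC P.
have Pc_unit : Pc \in unitmx by rewrite map_unitmx.
have XJ : ('X%:M : 'M[{poly F}]_n) = invmx Pc *m 'X%:M *m Pc.
  by rewrite -mulmxA -scalar_mxC mulmxA mulVmx // mul1mx.
rewrite !map_mxM map_invmx -/Pc {1}XJ -mulmxBl -mulmxBr !det_mulmx mulrC mulrA -det_mulmx.
by rewrite mulmxV // det1 mul1r.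
Qed.

Section HermitianSpectrum.
Variable C : numClosedFieldType.
Variables (n : nat) (A : 'M[C]_n).
Hypothesis A_herm : A ^t* = A.
Local Notation P := (spectralmx A).
Local Notation d := (spectral_diag A).

Lemma hermitian_spectralE : A = invmx P *m diag_mx d *m P.
Proof. by apply/orthomx_spectralP/normalmxP; rewrite A_herm. Qed.

Lemma char_poly_hermitian : char_poly A = \prod_i ('X - (d 0 i)%:P).
Proof.
rewrite [in LHS]hermitian_spectralE char_poly_conjmx ?spectral_unit //.
by rewrite char_poly_trig ?diag_mx_is_trig //; apply: eq_bigr => i _; rewrite mxE eqxx.
Qed.

Lemma mxtrace_hermitian : \tr A = \sum_i d 0 i.
Proof. by rewrite [in LHS]hermitian_spectralE mxtrace_conjmx ?spectral_unit // mxtrace_diag. Qed.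

Lemma mxtrace_hermitian_sqr : \tr (A *m A) = \sum_i d 0 i ^+ 2.
Proof.
rewrite [in LHS]hermitian_spectralE mulmx_conjmx ?spectral_unit // mxtrace_conjmx ?spectral_unit //.
by rewrite mulmx_diag mxtrace_diag; apply: eq_bigr => i _; rewrite mxE expr2.
Qed.

Lemma mxtrace_hermitian_cube : \tr (A *m A *m A) = \sum_i d 0 i ^+ 3.
Proof.
rewrite [in LHS]hermitian_spectralE !mulmx_conjmx ?spectral_unit //.
rewrite mxtrace_conjmx ?spectral_unit //.
by rewrite !mulmx_diag mxtrace_diag; apply: eq_bigr => i _; rewrite !mxE exprS expr2 mulrA.
Qed.

Hypothesis A_ge0 : forall i j, 0 <= A i j.
Variable M : C.
Hypothesis d_le_M : forall i, d 0 i <= M.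

Lemma hermitian_rayleigh_le (x : 'rV_n) : (x *m A *m x ^t*) 0 0 <= M * (x *m x ^t*) 0 0.
Proof.
have P_unitary := spectral_unitarymx A.
set z := x *m P ^t*.
have Px : P *m x ^t* = z ^t* by rewrite /z trmx_mul map_mxM trmxCK.
have -> : x *m A *m x ^t* = z *m diag_mx d *m z ^t*.
  by rewrite [in LHS]hermitian_spectralE invmx_unitary // !mulmxA -/z -!mulmxA Px.
have -> : x *m x ^t* = z *m z ^t*.
  by rewrite -Px /z !mulmxA -[x *m _ *m P]mulmxA -invmx_unitary // mulVmx ?spectral_unit // mulmx1.
rewrite mul_mx_diag !mxE mulr_sumr; apply: ler_sum => k _; rewrite !mxE.
by rewrite mulrAC [M * _]mulrC ler_wpM2l ?d_le_M // mul_conjC_ge0.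
Qed.

(* Perron-Frobenius: if [u] is a unit eigenvector for [d 0 j], the entrywise modulus of [u]
   has Rayleigh quotient at least [|d 0 j|]. *)
Lemma norm_spectral_le j : `|d 0 j| <= M.
Proof.
have P_unitary := spectral_unitarymx A.
set u := row j P; set v := map_mx (fun c => `|c|) u.
have uA : u *m A = d 0 j *: u.
  rewrite /u -row_mul {2}hermitian_spectralE !mulmxA mulmxV ?spectral_unit // mul1mx.
  by rewrite mul_diag_mx; apply/rowP => k; rewrite !mxE.
have uu : (u *m u ^t*) 0 0 = 1.
  have /matrixP/(_ j j) := unitarymxP P_unitary; rewrite !mxE eqxx mulr1n => <-.
  by apply: eq_bigr => k _; rewrite !mxE.
have vv : (v *m v ^t*) 0 0 = 1.
  rewrite -uu !mxE; apply: eq_bigr => k _; rewrite !mxE.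
  by rewrite geC0_conj // -normCK.
have -> : d 0 j = (u *m A *m u ^t*) 0 0 by rewrite uA -scalemxAl mxE uu mulr1.
apply: le_trans (_ : (v *m A *m v ^t*) 0 0 <= _); last first.
  by have := hermitian_rayleigh_le v; rewrite vv mulr1.
rewrite !mxE; apply: le_trans (ler_norm_sum _ _ _) _; apply: ler_sum => k _.
rewrite normrM !mxE norm_conjC geC0_conj // ler_wpM2r //.
apply: le_trans (ler_norm_sum _ _ _) _; apply: ler_sum => i _.
by rewrite normrM !mxE (ger0_norm (A_ge0 i k)).
Qed.

End HermitianSpectrum.

(** * Cliques and traces of the adjacency matrix *)

Definition clique_tuple n k (e : rel 'I_n) (f : {ffun 'I_k -> 'I_n}) :=
  [forall i, forall j, (i != j) ==> e (f i) (f j)].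

Lemma card_set_sum_nat (T : finType) (P : pred T) : #|[set x | P x]| = (\sum_x P x)%N.
Proof. by rewrite -sum1dep_card big_mkcond; apply: eq_bigr => x _; case: (P x). Qed.

Section CliqueTuples.
Variables (n : nat) (e : rel 'I_n).
Hypotheses (e_sym : symmetric e) (e_irr : irreflexive e).

Lemma clique_tuple_inj k (f : {ffun 'I_k -> 'I_n}) : clique_tuple e f -> injective f.
Proof.
move=> f_cl i j fij; apply/eqP/negPn/negP => i_neq_j.
by have := implyP (forallP (forallP f_cl i) j) i_neq_j; rewrite fij e_irr.
Qed.

Lemma card_clique_tuples k :
  #|[set f : {ffun 'I_k -> 'I_n} | clique_tuple e f]| = (k`! * num_cliques k e)%N.
Proof.
set cliques := [set S : {set 'I_n} | (#|S| == k) &&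
  [forall x in S, forall y in S, (x != y) ==> e x y]].
rewrite -sum1_card (partition_big (fun f : {ffun 'I_k -> 'I_n} => [set f x | x in 'I_k])
  (mem cliques)) /=; last first.
  move=> f; rewrite !inE => f_cl; rewrite card_imset ?card_ord ?eqxx //=;
    last exact: clique_tuple_inj.
  apply/forall_inP => _ /imsetP[i _ ->]; apply/forall_inP => _ /imsetP[j _ ->].
  apply/implyP => fi_neq; apply: (implyP (forallP (forallP f_cl i) j)).
  by apply: contraNneq fi_neq => ->.
rewrite /num_cliques -/cliques mulnC -sum_nat_const; apply: eq_bigr => S.
rewrite inE => /andP[/eqP S_card S_cl].
have -> : k`! = #|S| ^_ #|'I_k| by rewrite card_ord S_card ffactnn.
rewrite -card_inj_ffuns_on -sum1_card.
apply: eq_bigl => f; rewrite !inE; apply/andP/andP => [[f_cl /eqP f_im]|[f_on f_inj]].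
  split; last exact/injectiveP/clique_tuple_inj.
  by apply/ffun_onP => x; rewrite -f_im imset_f.
have f_injP : injective f by apply/injectiveP.
have f_im : [set f x | x in 'I_k] = S.
  apply/eqP; rewrite eqEcard card_imset // card_ord S_card leqnn andbT.
  by apply/subsetP => _ /imsetP[x _ ->]; apply: (ffun_onP f_on).
split; last by rewrite f_im.
apply/forallP => i; apply/forallP => j; apply/implyP => i_neq_j.
have /forall_inP/(_ _ (ffun_onP f_on j)) := forall_inP S_cl _ (ffun_onP f_on i).
by rewrite (inj_eq f_injP) i_neq_j.
Qed.

Lemma card_clique_tuples2 :
  #|[set f : {ffun 'I_2 -> 'I_n} | clique_tuple e f]| = (\sum_i \sum_j e i j)%N.
Proof.
rewrite card_set_sum_nat pair_big /=.
pose g (f : {ffun 'I_2 -> 'I_n}) := (f ord0, f ord_max).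
pose h (p : 'I_n * 'I_n) := [ffun x : 'I_2 => if x == ord0 then p.1 else p.2].
have gK : cancel g h.
  by move=> f; apply/ffunP => -[[|[|//]] ?]; rewrite ffunE /=; congr (f _); apply: val_inj.
have hK : cancel h g by move=> [i j]; rewrite /g !ffunE.
rewrite (reindex h) /=; last by exists g => ? _.
apply: eq_bigr => -[i j] _ /=; congr nat_of_bool; apply/forallP/idP => [/(_ ord0)|e_ij x].
  by move=> /forallP/(_ ord_max); rewrite !ffunE.
apply/forallP => y; apply/implyP.
by case: x y => -[|[|//]] ? [[|[|//]] ?]; rewrite !ffunE //= => _; rewrite e_sym.
Qed.

Lemma card_clique_tuples3 :
  #|[set f : {ffun 'I_3 -> 'I_n} | clique_tuple e f]|
    = (\sum_i \sum_j \sum_k (e i j && e j k && e k i))%N.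
Proof.
rewrite card_set_sum_nat; under [RHS]eq_bigr do rewrite pair_big /=; rewrite pair_big /=.
pose g (f : {ffun 'I_3 -> 'I_n}) := (f 0%R, (f 1%R, f 2%R)).
pose h (p : 'I_n * ('I_n * 'I_n)) :=
  [ffun x : 'I_3 => if x == 0%R then p.1 else if x == 1%R then p.2.1 else p.2.2].
have gK : cancel g h.
  by move=> f; apply/ffunP => -[[|[|[|//]]] ?]; rewrite ffunE /=; congr (f _); apply: val_inj.
have hK : cancel h g by move=> [i [j k]]; rewrite /g !ffunE.
rewrite (reindex h) /=; last by exists g => ? _.
apply: eq_bigr => -[i [j k]] _ /=; congr nat_of_bool.
apply/forallP/idP => [cl|/andP[/andP[e_ij e_jk] e_ki] x].
  have := implyP (forallP (cl 0%R) 1%R) isT; have := implyP (forallP (cl 1%R) 2%R) isT.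
  by have := implyP (forallP (cl 2%R) 0%R) isT; rewrite !ffunE /= => -> -> ->.
apply/forallP => y; apply/implyP.
by case: x y => -[|[|[|//]]] ? [[|[|[|//]]] ?]; rewrite !ffunE //= => _; rewrite // e_sym.
Qed.
End CliqueTuples.

Section AdjacencyTraces.
Variables (R : nzRingType) (n : nat) (e : rel 'I_n).
Hypotheses (e_sym : symmetric e) (e_irr : irreflexive e).
Local Notation A := (adjmx R e).

Lemma mxtrace_adjmx : \tr A = 0.
Proof. by rewrite /mxtrace big1 // => i _; rewrite mxE e_irr. Qed.

Lemma mxtrace_adjmx_sqr : \tr (A *m A) = (2 * num_edges e)%:R.
Proof.
rewrite -[(2 * _)%N]/(2`! * num_cliques 2 e)%N -card_clique_tuples //.
rewrite card_clique_tuples2 // natr_sum; apply: eq_bigr => i _.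
rewrite mxE natr_sum; apply: eq_bigr => j _.
by rewrite !mxE -natrM mulnb (e_sym j i) andbb.
Qed.

Lemma mxtrace_adjmx_cube : \tr (A *m A *m A) = (6 * num_triangles e)%:R.
Proof.
rewrite -[(6 * _)%N]/(3`! * num_cliques 3 e)%N -card_clique_tuples //.
rewrite card_clique_tuples3 // natr_sum; apply: eq_bigr => i _.
rewrite mxE natr_sum; under [LHS]eq_bigr do rewrite mxE big_distrl /=.
rewrite exchange_big /=; apply: eq_bigr => j _; rewrite natr_sum; apply: eq_bigr => k _.
by rewrite !mxE -!natrM !mulnb.
Qed.
End AdjacencyTraces.

(** * Spectrum of a graph *)

Lemma size_char_poly_roots (R : fieldType) n (A : 'M[R]_n) (s : seq R) :
  char_poly A = \prod_(x <- s) ('X - x%:P) -> size s = n.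
Proof. by move=> A_s; have := size_char_poly A; rewrite A_s size_prod_XsubC => -[]. Qed.

Lemma adjmx_ge0 (R : numDomainType) n (e : rel 'I_n) i j : 0 <= adjmx R e i j.
Proof. by rewrite mxE ler0n. Qed.

Section GraphSpectrum.
Variables (R : rcfType) (n : nat) (e : rel 'I_n) (s : seq R).
Hypotheses (e_sym : symmetric e) (e_irr : irreflexive e).
Hypothesis s_eig : char_poly (adjmx R e) = \prod_(x <- s) ('X - x%:P).
Local Notation A := (adjmx R[i] e).
Local Notation d := (spectral_diag A).

Lemma adjmx_hermitian : A ^t* = A.
Proof. by apply/matrixP => i j; rewrite !mxE conjC_nat e_sym. Qed.

Lemma perm_eigen_spectral : perm_eq (map (real_complex R) s) [seq d 0 i | i <- enum 'I_n].
Proof.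
apply: prod_XsubC_eq; rewrite [RHS]big_map big_enum /= -char_poly_hermitian ?adjmx_hermitian //.
have -> : A = map_mx (real_complex R) (adjmx R e).
  by apply/matrixP => i j; rewrite !mxE rmorph_nat.
rewrite -map_char_poly s_eig rmorph_prod !big_map; apply: eq_bigr => x _.
by rewrite /= map_polyXsubC.
Qed.

Lemma sum_eigen_exprC k : real_complex R (\sum_(x <- s) x ^+ k) = \sum_i d 0 i ^+ k.
Proof.
rewrite rmorph_sum; under eq_bigr do rewrite rmorphXn.
rewrite -(big_map (real_complex R) xpredT (fun y => y ^+ k)) (perm_big _ perm_eigen_spectral).
by rewrite big_map big_enum.
Qed.

Lemma sum_eigen : \sum_(x <- s) x = 0.
Proof.
apply: (@complexI R); rewrite rmorph0 -(@mxtrace_adjmx R[i] _ _ e_irr).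
rewrite mxtrace_hermitian ?adjmx_hermitian // -(eq_bigr _ (fun i _ => expr1 (d 0 i))).
by rewrite -sum_eigen_exprC; congr (_ _); apply: eq_bigr => x _; rewrite expr1.
Qed.

Lemma sum_eigen_sqr : \sum_(x <- s) x ^+ 2 = (2 * num_edges e)%:R.
Proof.
apply: (@complexI R); rewrite sum_eigen_exprC -mxtrace_hermitian_sqr ?adjmx_hermitian //.
by rewrite mxtrace_adjmx_sqr // rmorph_nat.
Qed.

Lemma sum_eigen_cube : \sum_(x <- s) x ^+ 3 = (6 * num_triangles e)%:R.
Proof.
apply: (@complexI R); rewrite sum_eigen_exprC -mxtrace_hermitian_cube ?adjmx_hermitian //.
by rewrite mxtrace_adjmx_cube // rmorph_nat.
Qed.

Lemma eigen_ge_opp_head : sorted >=%R s -> {in s, forall x, - s`_0 <= x}.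
Proof.
move=> s_sorted x xs; rewrite lerNl -lecR.
have /mapP [j _ dj] : real_complex R x \in [seq d 0 i | i <- enum 'I_n].
  by rewrite -(perm_mem perm_eigen_spectral) map_f.
have d_le i : d 0 i <= real_complex R s`_0.
  have /mapP [y ys ->] : d 0 i \in map (real_complex R) s.
    by rewrite (perm_mem perm_eigen_spectral) map_f ?mem_enum.
  rewrite lecR; case: s s_sorted ys {xs} => // z s' /= /(order_path_min ge_trans)/allP.
  by move=> z_ge; rewrite in_cons => /predU1P [->|/z_ge].
apply: le_trans (norm_spectral_le adjmx_hermitian (@adjmx_ge0 _ _ e) d_le j).
by rewrite -dj -normrN -rmorphN real_ler_norm // complex_real.
Qed.
End GraphSpectrum.

Lemma lt_powR_of_sqrt_cube_lt (R : realType) (y x : R) : 0 <= y -> 0 <= x ->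
  Num.sqrt y ^+ 3 < x -> y < x `^ (2 / 3).
Proof.
move=> y_ge0 x_ge0 sqrt_lt.
have cube_powR : (x `^ (2 / 3)) ^+ 3 = x ^+ 2.
  rewrite -powR_mulrn ?powR_ge0 // -powRrM -mulrA mulVf ?pnatr_eq0 // mulr1.
  by rewrite powR_mulrn.
rewrite -(ltr_pXn2r (_ : 0 < 3)%N) ?nnegrE ?powR_ge0 // cube_powR.
have -> : y ^+ 3 = (Num.sqrt y ^+ 3) ^+ 2 by rewrite -exprM mulnC exprM sqr_sqrtr.
by rewrite ltr_pXn2r ?nnegrE ?exprn_ge0 ?sqrtr_ge0.
Qed.

Lemma num_edges_le_bin2 n (e : rel 'I_n) : (num_edges e <= 'C(n, 2))%N.
Proof.
rewrite /num_edges /num_cliques -[X in 'C(X, _)](card_ord n) -card_draws.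
by apply: subset_leq_card; apply/subsetP => S; rewrite !inE => /andP[].
Qed.

Theorem theorem3p1 (R : realType) (n : nat) (e : rel 'I_n) (s : seq R) :
  simple_graph e ->
  (2 <= num_edges e)%N ->
  eigen_desc (adjmx R e) s ->
  let lambda1 := s`_0 in
  let lambda2 := s`_1 in
  let m := (num_edges e)%:R : R in
  let t := num_triangles e in
  lambda1 ^+ 2 + lambda2 ^+ 2 <= m + (3 * t)%:R `^ (2 / 3 : R) /\
  ((0 < t)%N -> lambda1 ^+ 2 + lambda2 ^+ 2 < m + (3 * t)%:R `^ (2 / 3 : R)).
Proof.
move=> [e_sym e_irr] two_le_m [s_sorted s_eig] l1 l2 m t; rewrite {}/l1 {}/l2.
have size_s : (3 <= size s)%N.
  rewrite (size_char_poly_roots s_eig).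
  by have := leq_trans two_le_m (num_edges_le_bin2 e); case: (n) => [|[|[|]]].
set y := s`_0 ^+ 2 + s`_1 ^+ 2 - m.
have y_lt : 0 < y -> y < (3 * t)%:R `^ (2 / 3).
  move=> y_gt0; apply: lt_powR_of_sqrt_cube_lt (ltW y_gt0) (ler0n _ _) _.
  have d_gt0 : 0 < Num.sqrt y by rewrite sqrtr_gt0.
  have := two_cube_lt_sum_cubes_sorted s_sorted size_s (sum_eigen e_sym e_irr s_eig)
    (eigen_ge_opp_head e_sym s_eig s_sorted) d_gt0.
  rewrite (sum_eigen_cube e_sym e_irr s_eig) (sum_eigen_sqr e_sym e_irr s_eig).
  rewrite sqr_sqrtr ?ltW // natrM /y /m.
  by rewrite -[6%N]/(2 * 3)%N -mulnA natrM; lra.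
have y_def : s`_0 ^+ 2 + s`_1 ^+ 2 = m + y by rewrite /y; lra.
have powR_ge0 : 0 <= (3 * t)%:R `^ (2 / 3 : R) by apply: powR_ge0.
split => [|t_gt0]; have [y_le0|/y_lt y_lt_powR] := lerP y 0; try lra.
have powR_gt0 : 0 < (3 * t)%:R `^ (2 / 3 : R) by rewrite powR_gt0 // ltr0n muln_gt0.
lra.
Qed.
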